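(* Fix $c\ge0$ and consider $\partial_t u=\partial_{xx}u-c\partial_x u$ ($x>0$), $\partial_x u=g(u)$ ($x=0$), where $g$ satisfies: there is $y_1>0$ with $g(0)=g(y_1)=0$ and $g(y)<0$ for $y\in(0,y_1)$. Then for all sufficiently large $k$ there exist $T_k>0$ and a function $\overline u_k\in C([0,T_k],BUC([0,\infty)))$ such that: (1) $\overline u_k(\cdot,0)=1/k^2$; (2) $\overline u_k$ is a super-solution of the problem for $t\in(0,T_k]$; (3) $\overline u_k(0,T_k)=1/k$; (4) $T_k\to\infty$ as $k\to\infty$.
   Context: $g\in C^2(\mathbb{R},\mathbb{R})$ is $2\pi$-periodic. A super-solution on a time interval $(s,T)$ is a function $\overline u(x,t)$, continuous for $s\le t\le T$, satisfying classically $\partial_t\overline u\ge\partial_{xx}\overline u-c\partial_x\overline u$ for $x>0$, $t\in(s,T)$, and $\partial_x\overline u\le g(\overline u)$ at $x=0$, $t\in(s,T)$. *)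

From Stdlib Require Import Reals Lra.
From Coquelicot Require Import Coquelicot.
Open Scope R_scope.

Definition C2 (g : R -> R) : Prop :=
  (forall y, ex_derive g y) /\
  (forall y, ex_derive (Derive g) y) /\
  (forall y, continuous (Derive (Derive g)) y).

Definition periodic_2pi (g : R -> R) : Prop := forall y, g (y + 2 * PI) = g y.

(* Functions are written u x t (space x, time t). *)

Definition BUC0 (f : R -> R) : Prop :=
  (exists M, forall x, 0 <= x -> Rabs (f x) <= M) /\
  (forall eps, 0 < eps -> exists delta, 0 < delta /\
     forall x y, 0 <= x -> 0 <= y -> Rabs (x - y) < delta ->
       Rabs (f x - f y) < eps).

(* u belongs to C([0,T], BUC([0,oo))) : each time slice is BUC and
   t |-> u(.,t) is continuous for the sup norm on [0,oo). *)
Definition C_BUC (T : R) (u : R -> R -> R) : Prop :=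
  (forall t, 0 <= t <= T -> BUC0 (fun x => u x t)) /\
  (forall t, 0 <= t <= T -> forall eps, 0 < eps -> exists delta, 0 < delta /\
     forall t', 0 <= t' <= T -> Rabs (t' - t) < delta ->
       forall x, 0 <= x -> Rabs (u x t' - u x t) <= eps).

Definition cont_on_strip (s T : R) (u : R -> R -> R) : Prop :=
  forall x t, 0 <= x -> s <= t <= T -> forall eps, 0 < eps ->
    exists delta, 0 < delta /\
      forall x' t', 0 <= x' -> s <= t' <= T ->
        Rabs (x' - x) < delta -> Rabs (t' - t) < delta ->
        Rabs (u x' t' - u x t) < eps.

Definition right_dx0 (u : R -> R -> R) (t l : R) : Prop :=
  filterlim (fun h => (u h t - u 0 t) / h) (at_right 0) (locally l).

(* classical super-solution on the time interval (s,T) of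
   u_t = u_xx - c u_x (x>0), u_x = g(u) (x=0) *)
Definition supersolution (c : R) (g : R -> R) (s T : R) (u : R -> R -> R) : Prop :=
  cont_on_strip s T u /\
  (forall x t, 0 < x -> s < t < T ->
     ex_derive (fun t' => u x t') t /\
     (forall x', 0 < x' -> ex_derive (fun y => u y t) x') /\
     ex_derive (fun y => Derive (fun z => u z t) y) x /\
     Derive (fun t' => u x t') t >=
       Derive (fun y => Derive (fun z => u z t) y) x
       - c * Derive (fun y => u y t) x) /\
  (forall t, s < t < T ->
     exists l, right_dx0 u t l /\ l <= g (u 0 t)).

From Stdlib Require Import Reals Lra.
From Coquelicot Require Import Coquelicot.
Open Scope R_scope.

(* The super-solution is a growing amplitude A(t) = k^-2 e^(mu t) times a boundary layer,
     u(x,t) = A(t) (1 + 2 L w(t) e^(-x/w(t))),   w(t) = sqrt (8t / (1 + gamma t)),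
   with gamma = 32 L^2.  Only g(0) = 0 and the differentiability of g at 0 matter: they give g(y) >= -L y on some [0, d], so the flux
   condition u_x(0,t) = -2 L A(t) <= g(u(0,t)) holds while u(0,t) <= d, because 2 L w <= 1.
   The layer thickness w vanishes at t = 0, so u(.,0) is the constant k^-2, and it obeys
   1/w - w' <= gamma, which is exactly what the interior inequality needs once
   mu >= 2 L (gamma + c).  Taking T_k = ln k / (2D) and calibrating mu_k so that
   u(0,T_k) = 1/k forces mu_k >= D and T_k -> oo. *)

Lemma exp_le x y : x <= y -> exp x <= exp y.
Proof.
  intros [Hlt | ->]; [now left; apply exp_increasing | apply Rle_refl].
Qed.

Lemma exp_opp_mul_one_plus_le_1 z : exp (- z) * (1 + z) <= 1.
Proof.
  assert (Hinv : exp (- z) * exp z = 1) by (rewrite <- exp_plus, Rplus_opp_l; apply exp_0).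
  pose proof (exp_ineq1_le z). pose proof (exp_pos (- z)). nra.
Qed.

Lemma continuity_pt_eps_delta f t : continuity_pt f t -> forall eps, 0 < eps ->
  exists delta, 0 < delta /\ forall t', Rabs (t' - t) < delta -> Rabs (f t' - f t) < eps.
Proof.
  intros Hf eps Heps. destruct (Hf eps Heps) as [delta [Hdelta Hclose]].
  exists delta. split; [exact Hdelta|]. intros t' Ht'.
  destruct (Req_dec t' t) as [-> | Hneq].
  - rewrite Rminus_diag, Rabs_R0. exact Heps.
  - apply (Hclose t'). split; [split; [exact I | auto] | exact Ht'].
Qed.

Lemma Rabs_sub_le_of_derive_bound f f' K a b :
  (forall y, Rmin a b <= y <= Rmax a b -> is_derive f y (f' y) /\ Rabs (f' y) <= K) ->
  Rabs (f b - f a) <= K * Rabs (b - a).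
Proof.
  intros Hf. destruct (MVT_abs f f' a b) as [y [-> Hy]].
  - intros y Hy. apply is_derive_Reals, Hf, Hy.
  - apply Rmult_le_compat_r; [apply Rabs_pos | apply Hf, Hy].
Qed.

Lemma right_dx0_of_is_derive (u : R -> R -> R) t l :
  is_derive (fun x => u x t) 0 l -> right_dx0 u t l.
Proof.
  intros Hu. apply is_derive_Reals in Hu. apply filterlim_locally. intros eps.
  destruct (Hu eps (cond_pos eps)) as [delta Hdelta].
  exists delta. intros h Hh Hpos.
  change (Rabs (h - 0) < delta) in Hh. change (Rabs ((u h t - u 0 t) / h - l) < eps).
  rewrite Rminus_0_r in Hh.
  specialize (Hdelta h ltac:(lra) Hh). rewrite Rplus_0_l in Hdelta. exact Hdelta.
Qed.

Lemma linear_lower_bound_of_derive (g : R -> R) : ex_derive g 0 -> g 0 = 0 ->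
  exists L d, 1 <= L /\ 0 < d /\ forall y, 0 <= y <= d -> - L * y <= g y.
Proof.
  intros [l Hl] Hg0. apply is_derive_Reals in Hl.
  destruct (Hl 1 Rlt_0_1) as [delta Hdelta]. pose proof (cond_pos delta).
  exists (Rmax 1 (1 - l)), (delta / 2).
  split; [apply Rmax_l | split; [lra|]].
  intros y [Hy0 Hyd]. destruct (Req_dec y 0) as [-> | Hy]; [rewrite Hg0; lra|].
  specialize (Hdelta y Hy ltac:(rewrite Rabs_right; lra)).
  rewrite Rplus_0_l, Hg0, Rminus_0_r in Hdelta. apply Rabs_def2 in Hdelta.
  assert (Hquot : (l - 1) * y <= g y).
  { replace (g y) with (g y / y * y) by (field; lra). apply Rmult_le_compat_r; lra. }
  pose proof (Rmax_r 1 (1 - l)). nra.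
Qed.

Definition layer (x e : R) : R := e * exp (- x / e).

Lemma layer_0_r x : layer x 0 = 0.
Proof. unfold layer. ring. Qed.

Lemma layer_0_l e : layer 0 e = e.
Proof. unfold layer. rewrite Ropp_0, Rdiv_0_l, exp_0. ring. Qed.

Lemma exp_opp_div_le_1 x e : 0 <= x -> 0 < e -> exp (- x / e) <= 1.
Proof.
  intros Hx He. rewrite <- exp_0, Rdiv_opp_l. apply exp_le.
  pose proof (Rdiv_le_0_compat x e Hx He). lra.
Qed.

Lemma layer_bounds x e : 0 <= x -> 0 <= e -> 0 <= layer x e <= e.
Proof.
  intros Hx [He | <-]; [|rewrite layer_0_r; lra].
  unfold layer. pose proof (exp_pos (- x / e)).
  pose proof (exp_opp_div_le_1 x e Hx He). split; nra.
Qed.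

Lemma is_derive_layer_x x e : e <> 0 -> is_derive (fun y => layer y e) x (- exp (- x / e)).
Proof. intros He. unfold layer. auto_derive; [exact I | unfold Rdiv; field; exact He]. Qed.

Lemma is_derive_layer_e x e : 0 < e -> is_derive (layer x) e (exp (- x / e) * (1 + x / e)).
Proof. intros He. unfold layer. auto_derive; [lra | unfold Rdiv; field; lra]. Qed.

Lemma layer_lipschitz_x x x' e : 0 <= x -> 0 <= x' -> 0 <= e ->
  Rabs (layer x' e - layer x e) <= Rabs (x' - x).
Proof.
  intros Hx Hx' [He | <-].
  2: { rewrite !layer_0_r, Rminus_diag, Rabs_R0. apply Rabs_pos. }
  rewrite <- (Rmult_1_l (Rabs (x' - x))).
  apply (Rabs_sub_le_of_derive_bound (fun y => layer y e) (fun y => - exp (- y / e))).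
  intros y [Hy _]. split; [apply is_derive_layer_x; lra|].
  assert (0 <= y) by (apply Rle_trans with (2 := Hy), Rmin_glb; lra).
  rewrite Rabs_Ropp, Rabs_right by (left; apply exp_pos).
  now apply exp_opp_div_le_1.
Qed.

Lemma layer_lipschitz_e x e e' : 0 <= x -> 0 <= e -> 0 <= e' ->
  Rabs (layer x e' - layer x e) <= Rabs (e' - e).
Proof.
  intros Hx [He | <-] [He' | <-].
  - rewrite <- (Rmult_1_l (Rabs (e' - e))).
    apply (Rabs_sub_le_of_derive_bound (layer x) (fun y => exp (- x / y) * (1 + x / y))).
    intros y [Hy _].
    assert (0 < y) by (apply Rlt_le_trans with (2 := Hy), Rmin_glb_lt; lra).
    split; [now apply is_derive_layer_e|].
    pose proof (exp_pos (- x / y)). pose proof (Rdiv_le_0_compat x y Hx ltac:(lra)).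
    rewrite Rabs_right by nra. rewrite Rdiv_opp_l. apply exp_opp_mul_one_plus_le_1.
  - rewrite layer_0_r, !Rminus_0_l, !Rabs_Ropp.
    destruct (layer_bounds x e Hx ltac:(lra)). rewrite !Rabs_right; lra.
  - rewrite layer_0_r, !Rminus_0_r.
    destruct (layer_bounds x e' Hx ltac:(lra)). rewrite !Rabs_right; lra.
  - rewrite Rminus_diag, Rabs_R0. apply Rabs_pos.
Qed.

Definition width (gamma t : R) : R := sqrt (8 * t / (1 + gamma * t)).

Lemma width_0 gamma : width gamma 0 = 0.
Proof. unfold width. rewrite Rmult_0_r, Rdiv_0_l. apply sqrt_0. Qed.

Lemma width_ge0 gamma t : 0 <= width gamma t.
Proof. apply sqrt_pos. Qed.

Lemma width_gt0 gamma t : 0 <= gamma -> 0 < t -> 0 < width gamma t.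
Proof. intros. apply sqrt_lt_R0, Rdiv_lt_0_compat; nra. Qed.

Lemma width_sqr_le gamma t : 0 < gamma -> 0 <= t -> width gamma t ^ 2 <= 8 / gamma.
Proof.
  intros Hg Ht. unfold width. rewrite pow2_sqrt by (apply Rdiv_le_0_compat; nra).
  apply Rmult_le_reg_r with ((1 + gamma * t) * gamma); [nra|].
  field_simplify; nra.
Qed.

Lemma continuity_pt_width gamma t : 0 <= gamma -> 0 <= t -> continuity_pt (width gamma) t.
Proof.
  intros Hg Ht. unfold width.
  apply (continuity_pt_comp (fun s => 8 * s / (1 + gamma * s)) sqrt).
  - apply continuity_pt_div; [| |nra]; reg.
  - apply continuity_pt_sqrt, Rdiv_le_0_compat; nra.
Qed.

Definition width_derive (gamma t : R) : R := 4 / ((1 + gamma * t) ^ 2 * width gamma t).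

Lemma is_derive_width gamma t : 0 <= gamma -> 0 < t ->
  is_derive (width gamma) t (width_derive gamma t).
Proof.
  intros Hg Ht. pose proof (width_gt0 gamma t Hg Ht). unfold width_derive, width in *.
  auto_derive.
  - split; [nra | split; [apply Rdiv_lt_0_compat; nra | exact I]].
  - change (8 * t * / (1 + gamma * t)) with (8 * t / (1 + gamma * t)).
    field. split; nra.
Qed.

Lemma width_inv_sub_derive_le gamma t : 1 <= gamma -> 0 < t ->
  / width gamma t - width_derive gamma t <= gamma.
Proof.
  intros Hg Ht. unfold width_derive. pose proof (width_gt0 gamma t ltac:(lra) Ht) as Hw.
  assert (Hsq : width gamma t ^ 2 = 8 * t / (1 + gamma * t)).
  { unfold width. apply pow2_sqrt, Rdiv_le_0_compat; nra. }
  set (w := width gamma t) in *. set (p := (1 + gamma * t) ^ 2).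
  assert (Hp : 1 < p) by (unfold p; nra).
  replace (/ w - 4 / (p * w)) with ((p - 4) / (p * w)) by (field; lra).
  apply Rmult_le_reg_r with (p * w); [nra|].
  unfold Rdiv. rewrite Rmult_assoc, Rinv_l, Rmult_1_r by nra.
  destruct (Rle_or_lt (gamma * t) 1) as [Hshort | Hlong].
  - assert (0 < gamma * t) by nra. assert (p <= 4) by (unfold p; nra).
    assert (0 <= gamma * (p * w)) by (apply Rmult_le_pos; nra). lra.
  - assert (Hw2 : 1 <= (gamma * w) ^ 2).
    { rewrite Rpow_mult_distr, Hsq.
      apply Rmult_le_reg_r with (1 + gamma * t); [nra|].
      unfold Rdiv. rewrite Rmult_assoc, (Rmult_assoc (8 * t)), Rinv_l, Rmult_1_r by nra.
      nra. }
    assert (0 < gamma * w) by (apply Rmult_lt_0_compat; lra).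
    assert (1 <= gamma * w) by nra.
    replace (gamma * (p * w)) with (p * (gamma * w)) by ring. nra.
Qed.

Definition barrier (L a mu x t : R) : R :=
  a * exp (mu * t) * (1 + 2 * L * layer x (width (32 * L ^ 2) t)).

Section Barrier.

Variables L a mu : R.
Hypotheses (L_ge1 : 1 <= L) (a_gt0 : 0 < a).

Local Notation gamma := (32 * L ^ 2).
Local Notation w := (width gamma).
Local Notation A t := (a * exp (mu * t)).
Local Notation u := (barrier L a mu).

Let gamma_ge1 : 1 <= gamma.
Proof. nra. Qed.

Lemma amplitude_pos t : 0 < A t.
Proof. apply Rmult_lt_0_compat; [exact a_gt0 | apply exp_pos]. Qed.

Lemma barrier_layer_bounds x t : 0 <= x -> 0 <= t -> 0 <= 2 * L * layer x (w t) <= 1.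
Proof.
  intros Hx Ht. destruct (layer_bounds x (w t) Hx (width_ge0 _ _)).
  pose proof (width_sqr_le gamma t ltac:(lra) Ht). pose proof (width_ge0 gamma t).
  assert (Hsq : (2 * L * w t) ^ 2 <= 1).
  { replace 1 with (4 * L ^ 2 * (8 / gamma)) by (field; lra).
    replace ((2 * L * w t) ^ 2) with (4 * L ^ 2 * w t ^ 2) by ring.
    apply Rmult_le_compat_l; nra. }
  assert (2 * L * w t <= 1) by nra.
  assert (2 * L * layer x (w t) <= 2 * L * w t) by (apply Rmult_le_compat_l; lra).
  split; [apply Rmult_le_pos|]; lra.
Qed.

Lemma barrier_initial x : u x 0 = a.
Proof. unfold barrier. rewrite width_0, layer_0_r, Rmult_0_r, exp_0. ring. Qed.

Lemma barrier_origin t : u 0 t = A t * (1 + 2 * L * w t).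
Proof. unfold barrier. now rewrite layer_0_l. Qed.

Lemma barrier_sub_le x x' t t' : 0 <= x -> 0 <= x' -> 0 <= t -> 0 <= t' ->
  Rabs (u x' t' - u x t) <=
  2 * Rabs (A t' - A t) + 2 * L * A t * (Rabs (x' - x) + Rabs (w t' - w t)).
Proof.
  intros Hx Hx' Ht Ht'. unfold barrier.
  pose proof (barrier_layer_bounds x' t' Hx' Ht').
  pose proof (amplitude_pos t).
  set (p' := layer x' (w t')) in *. set (p := layer x (w t)).
  assert (Hp : Rabs (p' - p) <= Rabs (x' - x) + Rabs (w t' - w t)).
  { replace (p' - p) with ((layer x' (w t') - layer x' (w t)) + (layer x' (w t) - layer x (w t)))
      by (unfold p, p'; ring).
    eapply Rle_trans; [apply Rabs_triang|].
    pose proof (layer_lipschitz_e x' (w t) (w t') Hx' (width_ge0 _ _) (width_ge0 _ _)).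
    pose proof (layer_lipschitz_x x x' (w t) Hx Hx' (width_ge0 _ _)). lra. }
  replace (A t' * (1 + 2 * L * p') - A t * (1 + 2 * L * p))
    with ((A t' - A t) * (1 + 2 * L * p') + 2 * L * A t * (p' - p)) by ring.
  eapply Rle_trans; [apply Rabs_triang|].
  rewrite (Rabs_mult (A t' - A t)), (Rabs_mult (2 * L * A t)).
  rewrite (Rabs_right (1 + 2 * L * p')), (Rabs_right (2 * L * A t)) by nra.
  pose proof (Rabs_pos (A t' - A t)).
  apply Rplus_le_compat; [nra|]. apply Rmult_le_compat_l; [nra | exact Hp].
Qed.

Lemma barrier_continuous t : 0 <= t -> forall eps, 0 < eps -> exists delta, 0 < delta /\
  forall x x' t', 0 <= x -> 0 <= x' -> 0 <= t' ->
    Rabs (x' - x) < delta -> Rabs (t' - t) < delta -> Rabs (u x' t' - u x t) < eps.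
Proof.
  intros Ht eps Heps.
  set (B := 2 * L * A t). assert (HB : 0 < B) by (pose proof (amplitude_pos t); unfold B; nra).
  set (eta := eps / (4 * B)). assert (Heta : 0 < eta) by (apply Rdiv_lt_0_compat; lra).
  assert (HA : continuity_pt (fun s => A s) t) by reg.
  destruct (continuity_pt_eps_delta _ _ HA (eps / 4) ltac:(lra)) as [d1 [Hd1 H1]].
  destruct (continuity_pt_eps_delta _ _ (continuity_pt_width gamma t ltac:(lra) Ht) eta Heta)
    as [d2 [Hd2 H2]].
  exists (Rmin (Rmin d1 d2) eta). split; [repeat apply Rmin_glb_lt; lra|].
  intros x x' t' Hx Hx' Ht' Hxx Htt.
  pose proof (Rmin_l (Rmin d1 d2) eta). pose proof (Rmin_r (Rmin d1 d2) eta).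
  pose proof (Rmin_l d1 d2). pose proof (Rmin_r d1 d2).
  specialize (H1 t' ltac:(lra)). specialize (H2 t' ltac:(lra)).
  eapply Rle_lt_trans; [apply barrier_sub_le; assumption|]. fold B.
  assert (B * (Rabs (x' - x) + Rabs (w t' - w t)) <= B * (2 * eta))
    by (apply Rmult_le_compat_l; lra).
  assert (B * (2 * eta) = eps / 2) by (unfold eta; field; lra).
  lra.
Qed.

Lemma barrier_C_BUC T : C_BUC T u.
Proof.
  split.
  - intros t Ht. split.
    + exists (2 * A t). intros x Hx.
      pose proof (barrier_layer_bounds x t Hx ltac:(lra)). pose proof (amplitude_pos t).
      unfold barrier. rewrite Rabs_right by nra. nra.
    + intros eps Heps.
      destruct (barrier_continuous t ltac:(lra) eps Heps) as [delta [Hdelta Hclose]].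
      exists delta. split; [exact Hdelta|]. intros x y Hx Hy Hxy.
      apply (Hclose y x t); try lra. rewrite Rminus_diag, Rabs_R0. exact Hdelta.
  - intros t Ht eps Heps.
    destruct (barrier_continuous t ltac:(lra) eps Heps) as [delta [Hdelta Hclose]].
    exists delta. split; [exact Hdelta|]. intros t' Ht' Htt x Hx. left.
    apply (Hclose x x t'); try lra. rewrite Rminus_diag, Rabs_R0. exact Hdelta.
Qed.

Lemma is_derive_barrier_x x t : 0 < t ->
  is_derive (fun y => u y t) x (- 2 * L * A t * exp (- x / w t)).
Proof.
  intros Ht. pose proof (width_gt0 gamma t ltac:(lra) Ht).
  unfold barrier, layer. set (e := w t) in *.
  auto_derive; [lra | unfold Rdiv; field; lra].
Qed.

Lemma is_derive_barrier_xx x t : 0 < t ->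
  is_derive (fun y => - 2 * L * A t * exp (- y / w t)) x (2 * L * A t * exp (- x / w t) / w t).
Proof.
  intros Ht. pose proof (width_gt0 gamma t ltac:(lra) Ht). set (e := w t) in *.
  auto_derive; [lra | unfold Rdiv; field; lra].
Qed.

Lemma is_derive_barrier_t x t : 0 < t ->
  is_derive (fun s => u x s) t
    (mu * u x t + 2 * L * A t * (exp (- x / w t) * (1 + x / w t)) * width_derive gamma t).
Proof.
  intros Ht. pose proof (width_gt0 gamma t ltac:(lra) Ht).
  pose proof (is_derive_width gamma t ltac:(lra) Ht) as Hw.
  unfold barrier, layer. auto_derive; replace (32 * (L * (L * 1))) with gamma by ring.
  - repeat split; try (now exists (width_derive gamma t)); lra.
  - replace (Derive (fun s => width gamma s) t) with (width_derive gamma t)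
      by (symmetry; now apply is_derive_unique).
    unfold Rdiv. field. lra.
Qed.

Lemma barrier_heat_residual_ge0 c x t : 0 <= c -> 2 * L * (gamma + c) <= mu -> 0 < x -> 0 < t ->
  let E := exp (- x / w t) in
  2 * L * A t * E / w t - c * (- 2 * L * A t * E) <=
  mu * u x t + 2 * L * A t * (E * (1 + x / w t)) * width_derive gamma t.
Proof.
  intros Hc Hmu Hx Ht E.
  pose proof (amplitude_pos t) as HA.
  pose proof (width_gt0 gamma t ltac:(lra) Ht) as Hw.
  pose proof (width_inv_sub_derive_le gamma t gamma_ge1 Ht) as Hrate.
  pose proof (barrier_layer_bounds x t ltac:(lra) ltac:(lra)) as Hlayer.
  pose proof (exp_pos (- x / w t)) as HE0.
  pose proof (exp_opp_div_le_1 x (w t) ltac:(lra) Hw) as HE1.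
  assert (Hw' : 0 <= width_derive gamma t)
    by (unfold width_derive; apply Rdiv_le_0_compat; [lra | apply Rmult_lt_0_compat; nra]).
  assert (Hxw : 0 <= x / w t) by (apply Rdiv_le_0_compat; lra).
  unfold barrier. fold E in HE0, HE1. set (dw := width_derive gamma t) in *.
  set (p := layer x (w t)) in *.
  (* Everything is [A t] times [mu (1 + 2 L p) + 2 L E (dw (1 + x / w) - 1 / w - c)];
     the rate bound [1 / w - dw <= gamma] makes the second term at least [- 2 L (gamma + c)]. *)
  assert (Hdrift : - (2 * L * (gamma + c)) <= 2 * L * E * (dw * (1 + x / w t) - / w t - c)).
  { assert (dw * (1 + x / w t) - / w t - c >= - (gamma + c)) by nra.
    assert (0 <= 2 * L * E) by nra.
    apply Rle_trans with (2 * L * E * (- (gamma + c))); [|apply Rmult_le_compat_l; lra].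
    assert (0 <= 2 * L * (gamma + c)) by nra. nra. }
  assert (Hmu0 : 0 <= mu) by nra.
  assert (Hgrowth : 0 <= mu * (2 * L * p)) by (apply Rmult_le_pos; lra).
  apply Rminus_le_0.
  replace (mu * (A t * (1 + 2 * L * p)) + 2 * L * A t * (E * (1 + x / w t)) * dw -
     (2 * L * A t * E / w t - c * (- 2 * L * A t * E)))
    with (A t * (mu * (1 + 2 * L * p) + 2 * L * E * (dw * (1 + x / w t) - / w t - c)))
    by (field; lra).
  apply Rmult_le_pos; lra.
Qed.

Lemma barrier_heat_supersolution c x t : 0 <= c -> 2 * L * (gamma + c) <= mu -> 0 < x -> 0 < t ->
  ex_derive (fun s => u x s) t /\
  (forall x', 0 < x' -> ex_derive (fun y => u y t) x') /\
  ex_derive (fun y => Derive (fun z => u z t) y) x /\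
  Derive (fun s => u x s) t >=
    Derive (fun y => Derive (fun z => u z t) y) x - c * Derive (fun y => u y t) x.
Proof.
  intros Hc Hmu Hx Ht.
  assert (Dx : forall y, Derive (fun z => u z t) y = - 2 * L * A t * exp (- y / w t))
    by (intros y; now apply is_derive_unique, is_derive_barrier_x).
  split; [eexists; now apply is_derive_barrier_t|].
  split; [intros x' _; eexists; now apply is_derive_barrier_x|].
  split.
  { eapply ex_derive_ext; [intros y; symmetry; apply Dx|].
    eexists. now apply is_derive_barrier_xx. }
  rewrite (Derive_ext (fun y => Derive (fun z => u z t) y) _ x Dx), Dx.
  replace (Derive (fun y => - 2 * L * A t * exp (- y / w t)) x)
    with (2 * L * A t * exp (- x / w t) / w t)
    by (symmetry; now apply is_derive_unique, is_derive_barrier_xx).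
  replace (Derive (fun s => u x s) t)
    with (mu * u x t + 2 * L * A t * (exp (- x / w t) * (1 + x / w t)) * width_derive gamma t)
    by (symmetry; now apply is_derive_unique, is_derive_barrier_t).
  apply Rle_ge. now apply barrier_heat_residual_ge0.
Qed.

Lemma barrier_boundary_flux g d t : (forall y, 0 <= y <= d -> - L * y <= g y) -> 0 < t ->
  u 0 t <= d -> exists l, right_dx0 u t l /\ l <= g (u 0 t).
Proof.
  intros Hg Ht Hd. exists (- 2 * L * A t). split.
  - apply right_dx0_of_is_derive.
    replace (- 2 * L * A t) with (- 2 * L * A t * exp (- 0 / w t))
      by (rewrite Ropp_0, Rdiv_0_l, exp_0; ring).
    now apply is_derive_barrier_x.
  - pose proof (barrier_layer_bounds 0 t ltac:(lra) ltac:(lra)) as Hlayer.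
    rewrite layer_0_l in Hlayer. pose proof (amplitude_pos t).
    rewrite barrier_origin in Hd |- *.
    assert (Hu0 : 0 <= A t * (1 + 2 * L * w t)) by nra.
    specialize (Hg _ (conj Hu0 Hd)).
    assert (A t * (2 * L * w t) <= A t * 1) by (apply Rmult_le_compat_l; lra).
    assert (L * (A t * (2 * L * w t)) <= L * (A t * 1)) by (apply Rmult_le_compat_l; lra).
    lra.
Qed.

Lemma barrier_supersolution c g d T : 0 <= c -> 2 * L * (gamma + c) <= mu ->
  (forall y, 0 <= y <= d -> - L * y <= g y) -> 2 * A T <= d ->
  supersolution c g 0 T u.
Proof.
  intros Hc Hmu Hg Hd. split; [|split].
  - intros x t Hx Ht eps Heps.
    destruct (barrier_continuous t ltac:(lra) eps Heps) as [delta [Hdelta Hclose]].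
    exists delta. split; [exact Hdelta|]. intros x' t' Hx' Ht'. now apply Hclose.
  - intros x t Hx Ht. now apply barrier_heat_supersolution.
  - intros t Ht. apply (barrier_boundary_flux g d); [exact Hg | lra|].
    pose proof (barrier_layer_bounds 0 t ltac:(lra) ltac:(lra)) as Hlayer.
    rewrite layer_0_l in Hlayer. pose proof (amplitude_pos t).
    assert (A t <= A T).
    { apply Rmult_le_compat_l; [lra|]. apply exp_le, Rmult_le_compat_l; nra. }
    rewrite barrier_origin. nra.
Qed.

End Barrier.

Definition horizon (D kk : R) : R := ln kk / (2 * D).

Lemma is_lim_seq_horizon D : 0 < D -> is_lim_seq (fun k => horizon D (INR k)) p_infty.
Proof.
  intros HD. apply (is_lim_seq_div _ _ p_infty (2 * D)).
  - apply (is_lim_comp_seq ln INR p_infty p_infty is_lim_ln_p); [now exists 0%nat|].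
    apply is_lim_seq_INR.
  - apply is_lim_seq_const.
  - intros H. injection H. lra.
  - apply is_Rbar_mult_p_infty_pos. simpl. apply Rinv_0_lt_compat. lra.
Qed.

Lemma horizon_pos D kk : 0 < D -> 1 < kk -> 0 < horizon D kk.
Proof.
  intros HD Hk. apply Rdiv_lt_0_compat; [|lra]. rewrite <- ln_1. apply ln_increasing; lra.
Qed.

Lemma calibrated_rate_ge D kk m : 0 < D -> 4 <= kk -> 0 <= m <= 1 ->
  D <= (ln kk - ln (1 + m)) / horizon D kk.
Proof.
  intros HD Hk Hm. pose proof (horizon_pos D kk HD ltac:(lra)) as HT.
  assert (Hln4 : ln 4 = 2 * ln 2).
  { replace 4 with (2 * 2) by ring. rewrite ln_mult by lra. ring. }
  assert (ln 4 <= ln kk) by (apply ln_le; lra).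
  assert (ln (1 + m) <= ln 2) by (apply ln_le; lra).
  apply Rmult_le_reg_r with (horizon D kk); [exact HT|].
  replace ((ln kk - ln (1 + m)) / horizon D kk * horizon D kk) with (ln kk - ln (1 + m))
    by (field; lra).
  unfold horizon. replace (D * (ln kk / (2 * D))) with (ln kk / 2) by (field; lra). lra.
Qed.

Lemma calibrated_endpoint kk T m : 0 < kk -> 0 < T -> 0 <= m ->
  / kk ^ 2 * exp ((ln kk - ln (1 + m)) / T * T) * (1 + m) = / kk.
Proof.
  intros Hk HT Hm. replace ((ln kk - ln (1 + m)) / T * T) with (ln kk - ln (1 + m)) by (field; lra).
  unfold Rminus. rewrite exp_plus, exp_Ropp, !exp_ln by lra. field. lra.
Qed.

Definition calibrated_rate (L D kk : R) : R :=
  (ln kk - ln (1 + 2 * L * width (32 * L ^ 2) (horizon D kk))) / horizon D kk.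

Lemma calibrated_barrier L c g d D kk : 1 <= L -> 0 <= c -> 0 < d ->
  (forall y, 0 <= y <= d -> - L * y <= g y) ->
  0 < D -> 2 * L * (32 * L ^ 2 + c) <= D -> 4 <= kk -> 2 / d <= kk ->
  let T := horizon D kk in
  let u := barrier L (/ kk ^ 2) (calibrated_rate L D kk) in
  0 < T /\ C_BUC T u /\ (forall x, 0 <= x -> u x 0 = / kk ^ 2) /\ supersolution c g 0 T u /\
  u 0 T = / kk.
Proof.
  intros HL Hc Hd Hg HD HDc Hk4 Hkd T u.
  assert (Ha : 0 < / kk ^ 2) by (apply Rinv_0_lt_compat; nra).
  assert (HT : 0 < T) by (apply horizon_pos; lra).
  pose proof (barrier_layer_bounds L HL 0 T ltac:(lra) ltac:(lra)) as Hm.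
  rewrite layer_0_l in Hm.
  set (m := 2 * L * width (32 * L ^ 2) T) in Hm.
  assert (Hend : / kk ^ 2 * exp (calibrated_rate L D kk * T) * (1 + m) = / kk)
    by (apply calibrated_endpoint; lra).
  split; [exact HT|]. split; [apply barrier_C_BUC; lra|].
  split; [intros x _; apply barrier_initial|].
  split; [|unfold u; now rewrite barrier_origin].
  apply (barrier_supersolution L (/ kk ^ 2) _ HL Ha c g d); [exact Hc | | exact Hg |].
  - apply Rle_trans with D; [exact HDc|].
    unfold calibrated_rate. apply calibrated_rate_ge; [lra | lra | exact Hm].
  - pose proof (amplitude_pos (/ kk ^ 2) (calibrated_rate L D kk) Ha T).
    assert (/ kk ^ 2 * exp (calibrated_rate L D kk * T) <= / kk) by (rewrite <- Hend; nra).
    apply Rle_trans with (2 / kk); [unfold Rdiv; lra|].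
    apply Rmult_le_reg_r with kk; [lra|]. unfold Rdiv. rewrite Rmult_assoc, Rinv_l by lra.
    apply Rmult_le_reg_l with (/ d); [now apply Rinv_0_lt_compat|].
    replace (/ d * (d * kk)) with kk by (field; lra). lra.
Qed.

Theorem lemma18 (g : R -> R) (c : R) :
  C2 g -> periodic_2pi g -> 0 <= c ->
  (exists y1, 0 < y1 /\ g 0 = 0 /\ g y1 = 0 /\
     forall y, 0 < y < y1 -> g y < 0) ->
  exists (K : nat) (T : nat -> R) (u : nat -> R -> R -> R),
    (forall k : nat, (K <= k)%nat ->
       0 < T k /\
       C_BUC (T k) (u k) /\
       (forall x, 0 <= x -> u k x 0 = / (INR k ^ 2)) /\
       supersolution c g 0 (T k) (u k) /\
       u k 0 (T k) = / INR k) /\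
    is_lim_seq T p_infty.
Proof.
  intros [Hg' _] _ Hc [_ [_ [Hg0 _]]].
  destruct (linear_lower_bound_of_derive g (Hg' 0) Hg0) as [L [d [HL [Hd Hg]]]].
  set (D := 2 * L * (32 * L ^ 2 + c) + 1).
  assert (HD : 0 < D) by (unfold D; nra).
  destruct (INR_unbounded (4 + 2 / d)) as [K HK].
  assert (H2d : 0 < 2 / d) by (apply Rdiv_lt_0_compat; lra).
  exists K, (fun k => horizon D (INR k)),
    (fun k => barrier L (/ INR k ^ 2) (calibrated_rate L D (INR k))).
  split; [|now apply is_lim_seq_horizon].
  intros k Hk. apply le_INR in Hk.
  apply (calibrated_barrier L c g d D (INR k)); try lra; [exact Hg | unfold D; lra].
Qed.
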